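(* For any odd $b\geq1$ and any $n>b$, the set $R_n^*(b)$ listed in $\prec$ order (increasing) is a $5$-Gray code: any two consecutive sequences in the list differ in at most $5$ positions.
   Context: A restricted growth function of length $n$ is an integer sequence $s_1\ldots s_n$ with $s_1=0$ and $0\leq s_{i+1}\leq \max\{s_j\}_{j=1}^i+1$ for $1\leq i\leq n-1$; $R_n$ is the set of these. For an integer $b\geq1$, $R^*_n(b)=\{s_1\ldots s_n\in R_n: \max_i s_i= b\}$. The Reflected Gray Code Order $\prec$ on length-$n$ sequences of nonnegative integers: $s_1\ldots s_n\prec t_1\ldots t_n$ if, for the smallest $k$ with $s_k\neq t_k$, either $\sum_{i=1}^{k-1}s_i$ is even and $s_k<t_k$, or $\sum_{i=1}^{k-1}s_i$ is odd and $s_k>t_k$. A list of same-length sequences is a $d$-Gray code if the Hamming distance (number of differing positions) between successive sequences is at most $d$. *)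

From mathcomp Require Import all_boot.
Set Implicit Arguments. Unset Strict Implicit. Unset Printing Implicit Defensive.

(* Sequences s_1 ... s_n are represented as s : seq nat, with s_i = nth 0 s (i-1). *)

Definition seqmax (s : seq nat) : nat := foldr maxn 0 s.

Definition is_rgf (s : seq nat) : bool :=
  (nth 0 s 0 == 0) &&
  all (fun i => nth 0 s i <= seqmax (take i s) + 1) (iota 1 (size s).-1).

Definition in_R (n : nat) (s : seq nat) : bool := (size s == n) && is_rgf s.

Definition in_Rstar (n b : nat) (s : seq nat) : bool := in_R n s && (seqmax s == b).

Definition rgc_lt (s t : seq nat) : Prop :=
  exists k : nat, k < size s /\ k < size t /\
    take k s = take k t /\ nth 0 s k != nth 0 t k /\
    (if ~~ odd (sumn (take k s)) then nth 0 s k < nth 0 t k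
     else nth 0 t k < nth 0 s k).

Definition hamming (s t : seq nat) : nat :=
  count (fun p : nat * nat => p.1 != p.2) (zip s t).

From mathcomp Require Import all_boot zify.
Set Implicit Arguments. Unset Strict Implicit. Unset Printing Implicit Defensive.

(* Let s < t be consecutive and let k be the first position where they differ.
   The common prefix s_1 .. s_(k-1) fixes the running maximum M and the parity of
   the prefix sum.  As nothing lies between s and t, the entries s_k, t_k are
   adjacent values a, a+1, the tail of s is the last and the tail of t the first
   completion of its own prefix, and because the parities of a and a+1 differ,
   both tails are least completions for the same direction of the order.  Least
   completions are greedy: ascending, they are zeros followed by the forced climb
   M+1, ..., b; descending, they start with the largest admissible value.  The two
   tails only differ through the running maximum, max(M,a) against max(M,a+1).
   For odd a both are ascending and differ in one position; for even a they are
   descending, and since b is odd they read a+1, 0^z, a+2, a+3, ... against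
   a+2, a+3, 0^(z+1), ..., which differ in at most four positions. *)

(* [s] can follow an RGF prefix whose maximum is [M]. *)
Fixpoint rg_tail (M : nat) (s : seq nat) : bool :=
  if s is x :: s' then (x <= M.+1) && rg_tail (maxn M x) s' else true.

Lemma all_rg_tail M u :
  all (fun i => nth 0 u i <= maxn M (seqmax (take i u)) + 1) (iota 0 (size u))
  = rg_tail M u.
Proof.
elim: u M => [|x u IH] M //=.
rewrite maxn0 addn1; congr andb.
rewrite -(IH (maxn M x)) -[1]/(1 + 0) iotaDl all_map; apply: eq_all => i /=.
by rewrite add1n /= /seqmax /= maxnA.
Qed.

Lemma is_rgf_cons x u : is_rgf (x :: u) = (x == 0) && rg_tail x u.
Proof.
rewrite /is_rgf /=; congr andb.
rewrite -all_rg_tail -[1]/(1 + 0) iotaDl all_map; apply: eq_all => i /=.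
by rewrite add1n /= /seqmax /=.
Qed.

(* The order [rgc_lt] on sequences that follow a common prefix of parity [c];
   [rgc_lt] itself is [rgc_lt_par false]. *)
Definition rgc_lt_par (c : bool) (s t : seq nat) : Prop :=
  exists k : nat, k < size s /\ k < size t /\
    take k s = take k t /\ nth 0 s k != nth 0 t k /\
    (if ~~ (c (+) odd (sumn (take k s))) then nth 0 s k < nth 0 t k
     else nth 0 t k < nth 0 s k).

Lemma rgc_lt_par_cons c x v w :
  rgc_lt_par c (x :: v) (x :: w) <-> rgc_lt_par (c (+) odd x) v w.
Proof.
split.
  move=> [[|k] [kv [kw [pre [neq lt]]]]]; first by rewrite /= eqxx in neq.
  exists k; move: pre lt => /= [pre]; rewrite oddD addbA => lt; do !split => //.
move=> [k [kv [kw [pre [neq lt]]]]]; exists k.+1 => /=.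
by rewrite !ltnS oddD addbA; do !split => //; rewrite pre.
Qed.

Lemma rgc_lt_par_swap c v w : rgc_lt_par c v w -> rgc_lt_par (~~ c) w v.
Proof.
move=> [k [kv [kw [pre [neq lt]]]]]; exists k; rewrite -pre eq_sym.
by do !split => //; move: lt; case: c; case: (odd _).
Qed.

Lemma rgc_lt_par_head c x y v w :
  x != y -> rgc_lt_par c (x :: v) (y :: w) -> if c then y < x else x < y.
Proof.
move=> xy [[|k] [_ [_ [pre [_ lt]]]]].
  by move: lt; rewrite /= addbF; case: c.
by move: pre => /= [exy]; rewrite exy eqxx in xy.
Qed.

Lemma rgc_lt_par_head_intro c x y v w :
  (if c then y < x else x < y) -> rgc_lt_par c (x :: v) (y :: w).
Proof.
move=> lt; exists 0; rewrite /= addbF neq_ltn.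
by case: c lt => lt; rewrite lt ?orbT.
Qed.

Lemma hamming_cons a c x y : hamming (a :: x) (c :: y) = (a != c) + hamming x y.
Proof. by []. Qed.

Lemma hamming_cat x1 x2 y1 y2 : size x1 = size x2 ->
  hamming (x1 ++ y1) (x2 ++ y2) = hamming x1 x2 + hamming y1 y2.
Proof. by move=> sz; rewrite /hamming zip_cat // count_cat. Qed.

Lemma hamming_xx x : hamming x x = 0.
Proof. by elim: x => //= a x IH; rewrite hamming_cons eqxx IH. Qed.

Lemma hamming_sym x y : hamming x y = hamming y x.
Proof. by elim: x y => [|a x IH] [|c y] //; rewrite !hamming_cons IH eq_sym. Qed.

Lemma hamming_le_count x y : hamming x y <= count (predC1 0) x + count (predC1 0) y.
Proof.
elim: x y => [|a x IH] [|c y] //=.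
rewrite hamming_cons addnACA leq_add //.
by case: a c => [|a] [|c] //=; case: (_ == _).
Qed.

Lemma hamming_nseq_rotate z p q : hamming (nseq z 0 ++ [:: p; q]) (q :: nseq z.+1 0) <= 3.
Proof.
apply: leq_trans (hamming_le_count _ _) _.
rewrite count_cat /= !count_nseq /= !mul0n addn0.
by case: (p != 0); case: (q != 0).
Qed.

Section Completions.

Variable b : nat.

Definition completion (M r : nat) (v : seq nat) : bool :=
  [&& size v == r, rg_tail M v & maxn M (seqmax v) == b].

Lemma completion_nil M r : completion M r [::] = (r == 0) && (M == b).
Proof. by rewrite /completion /= maxn0 eq_sym; case: (r == 0). Qed.

Lemma completion_cons M r x v :
  completion M r.+1 (x :: v) = (x <= M.+1) && completion (maxn M x) r v.
Proof.
rewrite /completion /= eqSS /seqmax /= maxnA.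
by case: (size v == r); case: (x <= M.+1).
Qed.

Lemma completion_bound M r v : completion M r v -> M <= b /\ b - M <= r.
Proof.
elim: v M r => [|x v IH] M [|r] //.
- by rewrite completion_nil /= => /eqP ->; rewrite subnn.
- by rewrite completion_cons => /andP [xM /IH]; lia.
Qed.

Lemma in_Rstar_cons n s : 0 < n ->
  in_Rstar n b s <-> exists2 s1, s = 0 :: s1 & completion 0 n.-1 s1.
Proof.
rewrite /in_Rstar /in_R /completion /seqmax => n_gt0; split.
  case: s => [|x s1]; first by case/andP=> /andP [/eqP sz _]; rewrite -sz in n_gt0.
  rewrite is_rgf_cons => /andP [/andP [/eqP <- /andP [/eqP -> ok]] /= mx].
  by exists s1; rewrite // eqxx ok.
by move=> [s1 -> /and3P [/eqP sz ok mx]]; rewrite is_rgf_cons ok /= sz prednK ?eqxx.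
Qed.

(* The least completion for [rgc_lt_par e], built greedily: descending ([e]) it
   takes the largest admissible value, ascending it takes 0 unless the remaining
   positions are all needed to climb from [M] to [b]. *)
Fixpoint first_completion (M : nat) (e : bool) (r : nat) : seq nat :=
  if r is r'.+1 then
    let x := if e then minn M.+1 b else if b - M <= r' then 0 else M.+1 in
    x :: first_completion (maxn M x) (e (+) odd x) r'
  else [::].

Lemma first_completion_valid M e r :
  M <= b -> b - M <= r -> completion M r (first_completion M e r).
Proof.
elim: r M e => [|r IH] M e Mb bMr /=.
  by rewrite completion_nil /=; apply/eqP; lia.
rewrite completion_cons; apply/andP; split.
  by case: e; last case: ifP => ?; lia.
by apply: IH; case: e; try case: ifP => ?; lia.
Qed.

Lemma least_completionE M e r v : completion M r v ->
  (forall w, completion M r w -> ~ rgc_lt_par e w v) -> v = first_completion M e r.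
Proof.
elim: r M e v => [|r IH] M e [|x v] // xv least; rewrite /=.
have := xv; rewrite completion_cons => /andP [xM v_ok].
have [xb bxr] := completion_bound v_ok.
set y := (if e then _ else _).
have y_ok : y <= M.+1 /\ maxn M y <= b /\ b - maxn M y <= r.
  by rewrite /y; case: (e); last case: ifP => ?; lia.
have xy : x = y.
  apply/eqP; apply/negPn/negP => xy.
  apply: (least (y :: first_completion (maxn M y) false r)).
    by case: y_ok => yM [? ?]; rewrite completion_cons yM first_completion_valid.
  apply: rgc_lt_par_head_intro; move: xy.
  by rewrite /y; case: (e) => /=; last case: ifP => ?; lia.
rewrite -xy; congr cons; apply: IH => // w w_ok lt_wv.
by apply: (least (x :: w)); [rewrite completion_cons xM | apply/rgc_lt_par_cons].
Qed.

Lemma first_completion_climb M e r :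
  M <= b -> b - M = r -> first_completion M e r = iota M.+1 r.
Proof.
elim: r M e => [|r IH] M e Mb bMr //=.
have -> : (if e then minn M.+1 b else if b - M <= r then 0 else M.+1) = M.+1.
  by case: e; last case: ifP => ?; lia.
by rewrite (maxn_idPr (leqnSn M)) IH //; lia.
Qed.

Lemma first_completion_asc M r : M <= b -> b - M <= r ->
  first_completion M false r = nseq (r - (b - M)) 0 ++ iota M.+1 (b - M).
Proof.
elim: r M => [|r IH] M Mb bMr; first by have -> : b - M = 0 by lia.
have [bMr'|bMr'] := leqP (b - M) r; first by rewrite /= bMr' maxn0 IH // subSn.
have bMr1 : b - M = r.+1 by lia.
by rewrite first_completion_climb // bMr1 subnn.
Qed.

Lemma first_completion_desc M r :
  M < b -> first_completion M true r.+1 = M.+1 :: first_completion M.+1 (odd M) r.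
Proof.
by move=> Mb /=; rewrite (minn_idPl Mb) (maxn_idPr (leqnSn M)) /= negbK.
Qed.

Lemma first_completion_desc_top r :
  first_completion b true r.+1 = b :: first_completion b (~~ odd b) r.
Proof. by rewrite /= (minn_idPr (leqnSn b)) maxnn. Qed.

Lemma hamming_first_completion_asc a r : a < b -> b - a <= r ->
  hamming (first_completion a false r) (first_completion a.+1 false r) <= 1.
Proof.
move=> ab bar; rewrite !first_completion_asc //; try lia.
have -> : r - (b - a.+1) = r - (b - a) + 1 by lia.
have -> : b - a = (b - a.+1).+1 by lia.
by rewrite nseqD -catA hamming_cat ?size_nseq // hamming_xx hamming_cons hamming_xx.
Qed.

Lemma hamming_first_completion_desc a r : odd b -> ~~ odd a -> a < b -> b - a <= r ->
  hamming (first_completion a true r) (first_completion a.+1 true r) <= 4.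
Proof.
move=> ob ea ab; case: r => [|r] bar; first lia.
rewrite first_completion_desc // (negbTE ea).
have [ab1|ab1] : a.+1 = b \/ a.+1 < b by lia.
  by rewrite ab1 first_completion_desc_top ob hamming_cons eqxx hamming_xx.
have ab2 : a.+2 < b.
  by rewrite ltn_neqAle ab1 andbT; apply: contraTneq ob => <- /=; rewrite negbK.
case: r bar => [|r] bar; first lia.
rewrite [first_completion a.+1 true _]first_completion_desc // oddS (negbTE ea).
rewrite first_completion_desc // !oddS negbK (negbTE ea) !first_completion_asc; try lia.
set z := r.+1 - (b - a.+1).
have -> : r - (b - a.+3) = z.+1 by rewrite /z; lia.
have -> : b - a.+1 = (b - a.+3).+2 by lia.
rewrite hamming_cons -[iota _ _]/([:: a.+2; a.+3] ++ _) catA -cat_cons.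
rewrite hamming_cat ?size_cat /= ?size_nseq ?addn2 // hamming_xx addn0.
by rewrite (leq_add (leq_b1 _) (hamming_nseq_rotate _ _ _)).
Qed.

Lemma hamming_first_completion_step M a r :
  odd b -> a <= M -> maxn M a.+1 <= b -> b - M <= r ->
  hamming (first_completion (maxn M a) (~~ odd a) r)
          (first_completion (maxn M a.+1) (~~ odd a) r) <= 4.
Proof.
move=> ob; rewrite leq_eqVlt => /predU1P [<- | aM] Mb bMr; last first.
  by rewrite (maxn_idPl (ltnW aM)) (maxn_idPl aM) hamming_xx.
rewrite maxnn (maxn_idPr (leqnSn a)) in Mb *.
case: (boolP (odd a)) => [oa | ea]; last exact: hamming_first_completion_desc.
exact: leq_trans (hamming_first_completion_asc Mb bMr) _.
Qed.

Definition no_completion_between M r c v w :=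
  forall u, completion M r u -> ~ (rgc_lt_par c v u /\ rgc_lt_par c u w).

Lemma no_completion_between_swap M r c v w :
  no_completion_between M r c v w -> no_completion_between M r (~~ c) w v.
Proof.
move=> gap u u_ok [wu uv]; apply: (gap u u_ok).
by split; [move/rgc_lt_par_swap: uv | move/rgc_lt_par_swap: wu]; rewrite negbK.
Qed.

Lemma no_completion_between_cons M r c x v w : x <= M.+1 ->
  no_completion_between M r.+1 c (x :: v) (x :: w) ->
  no_completion_between (maxn M x) r (c (+) odd x) v w.
Proof.
move=> xM gap u u_ok [vu uw]; apply: (gap (x :: u)); first by rewrite completion_cons xM.
by split; apply/rgc_lt_par_cons.
Qed.

Lemma consecutive_heads M N x y v w :
  completion M N.+1 (x :: v) -> completion M N.+1 (y :: w) -> x < y ->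
  no_completion_between M N.+1 false (x :: v) (y :: w) -> y = x.+1.
Proof.
rewrite !completion_cons => /andP [_ v_ok] /andP [yM w_ok] xy gap.
have [_ bMr] := completion_bound v_ok; have [Mb _] := completion_bound w_ok.
apply/eqP; rewrite eqn_leq xy andbT leqNgt; apply/negP => x1y.
apply: (gap (x.+1 :: first_completion (maxn M x.+1) false N)).
  by rewrite completion_cons first_completion_valid ?andbT; lia.
by split; apply: rgc_lt_par_head_intro.
Qed.

Lemma consecutive_tails M N x y v w :
  completion M N.+1 (x :: v) -> completion M N.+1 (y :: w) -> x < y ->
  no_completion_between M N.+1 false (x :: v) (y :: w) ->
  v = first_completion (maxn M x) (~~ odd x) N /\
  w = first_completion (maxn M y) (odd y) N.
Proof.
rewrite !completion_cons => /andP [xM v_ok] /andP [yM w_ok] xy gap.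
split; apply: least_completionE => // u u_ok lt.
  apply: (gap (x :: u)); first by rewrite completion_cons xM.
  split; last exact: rgc_lt_par_head_intro.
  by apply/rgc_lt_par_cons; move/rgc_lt_par_swap: lt; rewrite negbK.
apply: (gap (y :: u)); first by rewrite completion_cons yM.
by split; [apply: rgc_lt_par_head_intro | apply/rgc_lt_par_cons].
Qed.

Lemma hamming_consecutive_asc M N x y v w : odd b ->
  completion M N.+1 (x :: v) -> completion M N.+1 (y :: w) -> x < y ->
  no_completion_between M N.+1 false (x :: v) (y :: w) -> hamming (x :: v) (y :: w) <= 5.
Proof.
move=> ob xv yw xy gap.
have y1 := consecutive_heads xv yw xy gap; subst y.
have [-> ->] := consecutive_tails xv yw xy gap.
move: xv yw; rewrite !completion_cons => /andP [_ v_ok] /andP [xM w_ok].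
have [_ bMr] := completion_bound v_ok; have [Mb _] := completion_bound w_ok.
rewrite hamming_cons oddS; apply: leq_add (leq_b1 _) (hamming_first_completion_step ob _ Mb _); lia.
Qed.

Lemma hamming_consecutive_completions M N c v w : odd b ->
  completion M N v -> completion M N w -> rgc_lt_par c v w ->
  no_completion_between M N c v w -> hamming v w <= 5.
Proof.
move=> ob; elim: N M c v w => [|N IH] M c [|x v] [|y w] //.
case: (eqVneq x y) => [<- | xy] xv yw lt gap.
  move: xv yw; rewrite hamming_cons eqxx !completion_cons => /andP [xM v_ok] /andP [_ w_ok].
  apply: IH v_ok w_ok _ (no_completion_between_cons xM gap); exact/rgc_lt_par_cons.
have := rgc_lt_par_head xy lt; case: c lt gap => lt gap yx.
  rewrite hamming_sym; apply: (hamming_consecutive_asc ob yw xv yx).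
  exact: no_completion_between_swap gap.
exact: (hamming_consecutive_asc ob xv yw yx gap).
Qed.

End Completions.

Theorem theorem3 (b n : nat) (s t : seq nat) :
  odd b -> 1 <= b -> b < n ->
  in_Rstar n b s -> in_Rstar n b t ->
  rgc_lt s t ->
  (forall u : seq nat, in_Rstar n b u -> ~ (rgc_lt s u /\ rgc_lt u t)) ->
  hamming s t <= 5.
Proof.
move=> ob _ bn s_in t_in.
have n_gt0 : 0 < n by apply: leq_ltn_trans bn.
have [s1 -> s1_ok] := (in_Rstar_cons b s n_gt0).1 s_in.
have [t1 -> t1_ok] := (in_Rstar_cons b t n_gt0).1 t_in.
move=> st gap.
rewrite hamming_cons eqxx.
apply: (hamming_consecutive_completions (c := false) ob s1_ok t1_ok).
  exact: (rgc_lt_par_cons false 0 s1 t1).1 st.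
move=> u u_ok [s1u ut1]; apply: (gap (0 :: u)).
  by apply/(in_Rstar_cons b _ n_gt0); exists u.
by split; apply/(rgc_lt_par_cons false 0).
Qed.
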